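(* For $\sigma \in \mathfrak{S}_j$ and $\tau \in \mathfrak{S}_k$, let $\sigma^{-1}=\sigma^{-1}_1\cdots \sigma^{-1}_j$ and $\tau^{-1}=\tau^{-1}_1\cdots \tau^{-1}_k$ denote the inverses of $\sigma$ and $\tau$ respectively. Define $\pi=\sigma^{-1}_1\cdots \sigma^{-1}_j$ and $\delta=(j+1)(\tau^{-1}_1+j+1)\cdots (\tau^{-1}_k+j+1)$. Then \begin{align*} \sum_{\mu \in \sigma \lozenge \tau} t^{\mathrm{ides}(\mu)}&=\sum_{\alpha \in \mathrm{Sh}_l(\pi,\delta)} t^{\mathrm{des}(\alpha)},\\ \sum_{\mu \in \sigma \vartriangle \tau} t^{\mathrm{ides}(\mu)}&=\sum_{\alpha \in \mathrm{Sh}_{ls}(\pi,\delta)} t^{\mathrm{des}(\alpha)},\\ \sum_{\mu \in \sigma \triangledown \tau} t^{\mathrm{ides}(\mu)}&=\sum_{\alpha \in \mathrm{Sh}_{ll}(\pi,\delta)} t^{\mathrm{des}(\alpha)}. \end{align*}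
   Context: $\mathfrak{S}_n$ is the set of permutations of $[n]$. For a permutation $\alpha=\alpha_1\cdots\alpha_n$, $\mathrm{des}(\alpha)$ is the number of indices $i$ with $\alpha_i>\alpha_{i+1}$, and $\mathrm{ides}(\alpha)=\mathrm{des}(\alpha^{-1})$. For $\sigma\in\mathfrak{S}_j$, $\tau\in\mathfrak{S}_k$: $\sigma \lozenge\tau =\{ \mu = \sigma'1\tau' \in \mathfrak{S}_{j+k+1} : \sigma' \sim \sigma,\ \tau' \sim \tau \}$; $\sigma \vartriangle \tau =\{ \mu = \sigma'1\tau' \in \mathfrak{S}_{j+k+1} : \sigma' \sim \sigma,\ \tau' \sim \tau,\ j+k+1\in \tau' \}$; $\sigma \triangledown \tau =\{ \mu = \sigma'1\tau' \in \mathfrak{S}_{j+k+1} : \sigma' \sim \sigma,\ \tau' \sim \tau,\ 2\in \tau' \}$, where $\sigma'\sim\sigma$ means that reducing the letters of $\sigma'$ order-preservingly to $\{1,\dots,j\}$ yields $\sigma$. A permutation of length $n$ here means a sequence of $n$ distinct integers. For disjoint permutations $\pi=\pi_1\cdots\pi_m$ and $\delta=\delta_1\cdots\delta_n$ (no common letters), a shuffle of $\pi$ and $\delta$ is a permutation $\alpha=\alpha_1\cdots\alpha_{m+n}$ containing both $\pi$ and $\delta$ as subsequences. $\mathrm{Sh}_l(\pi,\delta)$ is the set of shuffles $\alpha$ of $\pi$ and $\delta$ with $\alpha_1=\delta_1$; $\mathrm{Sh}_{ls}(\pi,\delta)$ is the set of shuffles with $\alpha_1=\delta_1$ and $\alpha_{n+m}=\delta_n$;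 $\mathrm{Sh}_{ll}(\pi,\delta)$ is the set of shuffles with $\alpha_1=\delta_1$ and $\alpha_2=\delta_2$. *)

From mathcomp Require Import all_boot all_order all_algebra.
Set Implicit Arguments. Unset Strict Implicit. Unset Printing Implicit Defensive.

(* Words (permutations in one-line notation) are sequences of naturals. *)

Definition des (a : seq nat) : nat := count (fun p => p.2 < p.1) (zip a (behead a)).

Definition is_permn (n : nat) (s : seq nat) : bool := perm_eq s (iota 1 n).

(* inverse of a permutation word of [n]: position (1-based) of letter i *)
Definition inv_word (s : seq nat) : seq nat := [seq (index i s).+1 | i <- iota 1 (size s)].

Definition ides (s : seq nat) : nat := des (inv_word s).

(* order-preserving reduction of a word of distinct letters to {1,...,size s} *)
Definition std (s : seq nat) : seq nat := [seq count (fun y => y <= x) s | x <- s].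

Definition lozenge (j k : nat) (sigma tau : seq nat) : seq (seq nat) :=
  [seq mu <- permutations (iota 1 (j + k + 1)) |
     [&& nth 0 mu j == 1, std (take j mu) == sigma & std (drop j.+1 mu) == tau]].

Definition tri_up (j k : nat) (sigma tau : seq nat) : seq (seq nat) :=
  [seq mu <- lozenge j k sigma tau | (j + k + 1) \in drop j.+1 mu].

Definition tri_down (j k : nat) (sigma tau : seq nat) : seq (seq nat) :=
  [seq mu <- lozenge j k sigma tau | 2 \in drop j.+1 mu].

Definition shuffles (pi delta : seq nat) : seq (seq nat) :=
  [seq a <- permutations (pi ++ delta) | subseq pi a && subseq delta a].

Definition Sh_l (pi delta : seq nat) : seq (seq nat) :=
  [seq a <- shuffles pi delta | (0 < size delta) && (nth 0 a 0 == nth 0 delta 0)].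

Definition Sh_ls (pi delta : seq nat) : seq (seq nat) :=
  [seq a <- Sh_l pi delta | last 0 a == last 0 delta].

Definition Sh_ll (pi delta : seq nat) : seq (seq nat) :=
  [seq a <- Sh_l pi delta | (1 < size delta) && (nth 0 a 1 == nth 0 delta 1)].

Definition genpoly (stat : seq nat -> nat) (l : seq (seq nat)) : {poly int} :=
  \sum_(x <- l) 'X^(stat x).

From mathcomp Require Import all_boot all_order all_algebra.
From mathcomp Require Import zify.

Set Implicit Arguments.
Unset Strict Implicit.
Unset Printing Implicit Defensive.

(* Inversion mu |-> mu^-1 maps sigma <> tau bijectively onto Sh_l(pi, delta), turning ides
   into des.  For a permutation mu of [n], the letters <= j of mu^-1 list, by increasing
   value, the positions of the first j letters of mu, so they form the inverse of the
   standardization of mu_1 ... mu_j; likewise the letters > j+1 form the inverse of the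
   standardization of the part of mu after position j+1, shifted by j+1, and mu_(j+1) = 1
   says that mu^-1 starts with j+1.  Under this bijection "n lies after the 1" becomes
   "alpha ends with a letter of delta" and "2 lies after the 1" becomes alpha_2 = delta_2. *)

Lemma index_map_in (T1 T2 : eqType) (f : T1 -> T2) (s : seq T1) x :
  {in s &, injective f} -> x \in s -> index (f x) (map f s) = index x s.
Proof.
elim: s => //= a s IHs inj_f; rewrite inE => /predU1P[->|xs]; first by rewrite !eqxx.
have inj_s : {in s &, injective f} by move=> u v us vs; apply: inj_f; rewrite inE ?us ?vs orbT.
have [->|ax] := eqVneq a x; first by rewrite eqxx.
rewrite IHs // (inj_in_eq inj_f) ?inE ?eqxx ?xs ?orbT //.
by rewrite (negbTE ax).
Qed.

Lemma index_take (T : eqType) (s : seq T) m x :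
  x \in take m s -> index x (take m s) = index x s.
Proof. by move=> xs; rewrite -[in RHS](cat_take_drop m s) index_cat xs. Qed.

Lemma index_drop_uniq (T : eqType) (s : seq T) i x :
  uniq s -> x \in drop i s -> index x s = i + index x (drop i s).
Proof.
move=> us xs; have : uniq (take i s ++ drop i s) by rewrite cat_take_drop.
rewrite cat_uniq => /and3P[_ /hasPn dis _].
rewrite -[in index x s](cat_take_drop i s) index_cat (negbTE (dis x xs)) size_takel //.
by rewrite leqNgt; apply: contraL xs => /ltnW/drop_oversize->.
Qed.

Lemma mem_drop_index (T : eqType) (s : seq T) i x :
  uniq s -> x \in s -> (x \in drop i s) = (i <= index x s).
Proof.
move=> us xs; apply/idP/idP => [xd|le_ix]; first by rewrite (index_drop_uniq us xd) leq_addr.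
have := xs; rewrite -{1}(cat_take_drop i s) mem_cat => /orP[|//].
by rewrite in_take // ltnNge le_ix.
Qed.

Lemma nth_eq_index_uniq (T : eqType) x0 (s : seq T) i x :
  uniq s -> i < size s -> (nth x0 s i == x) = (index x s == i).
Proof.
move=> us lt_is; apply/eqP/eqP => [<-|ixs]; first by rewrite index_uniq.
by rewrite -ixs nth_index // -index_mem ixs.
Qed.

Lemma index_iota1 n x : x \in iota 1 n -> (index x (iota 1 n)).+1 = x.
Proof.
rewrite mem_iota => /andP[x_gt0 x_le_n].
have -> : x = nth 0 (iota 1 n) x.-1 by rewrite nth_iota; lia.
rewrite index_uniq ?iota_uniq ?size_iota ?nth_iota; lia.
Qed.

Lemma last_filter_eq (T : eqType) (P : pred T) x s :
  uniq s -> x \notin s -> s != [::] -> (last x (filter P s) == last x s) = P (last x s).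
Proof.
case/lastP: s => // t a; rewrite rcons_uniq mem_rcons inE negb_or => /andP[aNt _] /andP[xa _] _.
rewrite filter_rcons last_rcons; case: ifP => Pa; rewrite ?last_rcons ?eqxx //.
apply/negbTE; have := mem_last x (filter P t); rewrite inE mem_filter.
by case/predU1P=> [->|/andP[_ ta]] //; apply: contraNneq aNt => <-.
Qed.

Lemma head_filter_eq (T : eqType) (P : pred T) x s :
  uniq s -> x \notin s -> s != [::] -> (head x (filter P s) == head x s) = P (head x s).
Proof.
case: s => // a t /= /andP[aNt _]; rewrite inE negb_or => /andP[xa _] _.
case: ifP => Pa /=; rewrite ?eqxx //; apply/negbTE.
have : head x (filter P t) \in x :: filter P t.
  by case: (filter P t) => [|b u]; rewrite !inE eqxx ?orbT.
by rewrite inE mem_filter => /predU1P[->|/andP[_ ta]] //; apply: contraNneq aNt => <-.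
Qed.

Lemma count_leq_sorted (S : seq nat) x :
  sorted ltn S -> x \in S -> count (leq^~ x) S = (index x S).+1.
Proof.
elim: S => //= a S IHS path_aS; have lt_aS := order_path_min ltn_trans path_aS.
rewrite inE eq_sym; have [<- _|ax /= xS] := eqVneq a x.
  rewrite leqnn (eq_in_count (a2 := pred0)) ?count_pred0 // => y /(allP lt_aS) /=.
  by rewrite ltnNge => /negbTE.
by rewrite IHS ?(path_sorted path_aS) // ltnW // (allP lt_aS).
Qed.

Lemma sort_leq_ltn_sorted (s : seq nat) : uniq s -> sorted ltn (sort leq s).
Proof. by move=> us; rewrite ltn_sorted_uniq_leq sort_uniq us sort_sorted //; apply: leq_total. Qed.

Definition positions (S A : seq nat) : seq nat := [seq (index x S).+1 | x <- A].

Lemma inv_wordE (s : seq nat) : inv_word s = positions s (iota 1 (size s)).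
Proof. by []. Qed.

Lemma size_inv_word (s : seq nat) : size (inv_word s) = size s.
Proof. by rewrite size_map size_iota. Qed.

Lemma size_positions (S A : seq nat) : size (positions S A) = size A.
Proof. exact: size_map. Qed.

Lemma nth_inv_word (s : seq nat) i :
  i < size s -> nth 0 (inv_word s) i = (index i.+1 s).+1.
Proof. by move=> lt_is; rewrite (nth_map 0) ?size_iota ?nth_iota. Qed.

Lemma positions_perm (S A : seq nat) :
  uniq A -> perm_eq A S -> is_permn (size A) (positions S A).
Proof.
move=> uA pAS; have uS : uniq S by rewrite -(perm_uniq pAS).
apply: (perm_trans (perm_map _ pAS)); rewrite (perm_size pAS) -/(positions S S).
have -> : positions S S = map (addn 1) (iota 0 (size S)).
  apply: (@eq_from_nth _ 0); rewrite !size_map ?size_iota // => i lt_iS.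
  by rewrite (nth_map 0) ?size_iota // nth_iota // (nth_map 0) // index_uniq.
by rewrite -iotaDl.
Qed.

Lemma inv_word_positions (S A : seq nat) :
  uniq A -> perm_eq A S -> inv_word (positions S A) = positions A S.
Proof.
move=> uA pAS; have uS : uniq S by rewrite -(perm_uniq pAS).
have szS := perm_size pAS.
apply: (@eq_from_nth _ 0); rewrite size_map size_iota !size_positions // => i lt_iA.
rewrite nth_inv_word ?size_positions // (nth_map 0) -?szS //.
have SiA : nth 0 S i \in A by rewrite (perm_mem pAS) mem_nth // -szS.
rewrite -[in LHS](index_uniq 0 (_ : i < size S)) -?szS // index_map_in //.
by move=> x y; rewrite !(perm_mem pAS) => xS yS [] /index_inj; apply.
Qed.

Lemma positions_iota n (s : seq nat) :
  {subset s <= iota 1 n} -> positions (iota 1 n) s = s.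
Proof. by move=> sub; rewrite -[RHS]map_id; apply/eq_in_map => x /sub/index_iota1. Qed.

Section InverseWord.

Variables (n : nat) (s : seq nat).
Hypothesis perm_s : is_permn n s.

Lemma size_permn : size s = n.
Proof. by rewrite (perm_size perm_s) size_iota. Qed.

Lemma uniq_permn : uniq s.
Proof. by rewrite (perm_uniq perm_s) iota_uniq. Qed.

Lemma mem_permn x : (x \in s) = (0 < x <= n).
Proof. by rewrite (perm_mem perm_s) mem_iota add1n. Qed.

Lemma inv_word_perm : is_permn n (inv_word s).
Proof.
rewrite inv_wordE size_permn -[X in is_permn X](size_iota 1 n).
by apply: positions_perm; rewrite ?iota_uniq // perm_sym.
Qed.

Lemma inv_wordK : inv_word (inv_word s) = s.
Proof.
rewrite [inv_word s]inv_wordE size_permn inv_word_positions ?iota_uniq 1?perm_sym //.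
by apply: positions_iota => x; rewrite (perm_mem perm_s).
Qed.

End InverseWord.

Lemma inv_word_inj m n (s t : seq nat) :
  is_permn m s -> is_permn n t -> inv_word s = inv_word t -> s = t.
Proof. by move=> ps pt E; rewrite -(inv_wordK ps) E (inv_wordK pt). Qed.

Lemma eq_inv_word m n (s t : seq nat) :
  is_permn m s -> is_permn n t -> (inv_word s == inv_word t) = (s == t).
Proof. by move=> ps pt; apply/eqP/eqP => [/(inv_word_inj ps pt)|->]. Qed.

Section Standardization.

Variable A : seq nat.
Hypothesis uniq_A : uniq A.

Lemma stdE : std A = positions (sort leq A) A.
Proof.
apply/eq_in_map => x xA.
by rewrite -(count_sort leq) count_leq_sorted ?sort_leq_ltn_sorted ?mem_sort.
Qed.

Lemma std_perm : is_permn (size A) (std A).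
Proof. by rewrite stdE; apply: positions_perm; rewrite // perm_sym perm_sort. Qed.

Lemma inv_word_std : inv_word (std A) = positions A (sort leq A).
Proof. by rewrite stdE inv_word_positions // perm_sym perm_sort. Qed.

End Standardization.

Lemma filter_inv_word_window n (mu : seq nat) i m : is_permn n mu ->
  [seq p <- inv_word mu | i < p <= i + m] =
  map (addn i) (inv_word (std (take m (drop i mu)))).
Proof.
move=> perm_mu; set w := take m (drop i mu).
have uniq_mu := uniq_permn perm_mu.
have uniq_w : uniq w by rewrite take_uniq ?drop_uniq.
have index_w x : x \in w -> index x mu = i + index x w.
  by move=> xw; rewrite (index_drop_uniq uniq_mu (mem_take xw)) index_take.
have mem_w x : (x \in w) = (x \in mu) && (i <= index x mu < i + m).
  have [xd|xnd] := boolP (x \in drop i mu).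
    by rewrite in_take // (mem_drop xd) (index_drop_uniq uniq_mu xd) leq_addr ltn_add2l.
  rewrite (negbTE (contra (@mem_take _ _ _ _) xnd)).
  by case xmu: (x \in mu); rewrite //= -(mem_drop_index _ uniq_mu xmu) (negbTE xnd).
rewrite inv_word_std // inv_wordE filter_map -map_comp.
rewrite (_ : filter _ _ = sort leq w); last first.
  apply: (irr_sorted_eq ltn_trans ltnn); rewrite ?sort_leq_ltn_sorted //.
    by apply: sorted_filter; [apply: ltn_trans | apply: iota_ltn_sorted].
  move=> x; rewrite mem_filter mem_sort mem_w (perm_mem perm_mu) (size_permn perm_mu) /=.
  by rewrite ltnS andbC.
by apply/eq_in_map => x; rewrite mem_sort => /index_w /= ->; rewrite addnS.
Qed.

Lemma filter_inv_word_take n (mu : seq nat) j : is_permn n mu ->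
  [seq p <- inv_word mu | p <= j] = inv_word (std (take j mu)).
Proof.
move=> perm_mu; have := filter_inv_word_window 0 j perm_mu.
rewrite drop0 (eq_map add0n) map_id => <-.
apply: eq_in_filter => p.
by rewrite (mem_permn (inv_word_perm perm_mu)) => /andP[->].
Qed.

Lemma filter_inv_word_drop n (mu : seq nat) i : is_permn n mu ->
  [seq p <- inv_word mu | i < p] = map (addn i) (inv_word (std (drop i mu))).
Proof.
move=> perm_mu; rewrite -[drop i mu](take_oversize (_ : size _ <= n)); last first.
  by rewrite size_drop (size_permn perm_mu) leq_subr.
rewrite -(filter_inv_word_window i n perm_mu); apply: eq_in_filter => p.
rewrite (mem_permn (inv_word_perm perm_mu)) => /andP[_ le_pn].
by rewrite (leq_trans le_pn (leq_addl _ _)) andbT.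
Qed.

Lemma Sh_l_cons (pi ds a : seq nat) x : uniq a -> a \in Sh_l pi (x :: ds) ->
  exists2 a', a = x :: a' & ds = filter (mem ds) a'.
Proof.
rewrite !mem_filter => ua /andP[/andP[_ /eqP a0] /andP[/andP[_ sub] _]].
case: a a0 ua sub => [|y a'] //= -> /andP[_ ua']; rewrite eqxx => sub.
by exists a'; last by apply/subseq_uniqP.
Qed.

Section Lozenge.

Variables (j k : nat) (sigma tau : seq nat).
Hypotheses (perm_sigma : is_permn j sigma) (perm_tau : is_permn k tau).

Local Notation n := (j + k + 1).
Local Notation pi := (inv_word sigma).
Local Notation delta_tail := [seq x + j.+1 | x <- inv_word tau].
Local Notation delta := (j.+1 :: delta_tail).

Lemma delta_tailE : delta_tail = map (addn j.+1) (inv_word tau).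
Proof. by apply: eq_map => x; rewrite addnC. Qed.

Lemma perm_delta_tail : perm_eq delta_tail (iota j.+2 k).
Proof. by rewrite delta_tailE -[j.+2]addn1 iotaDl; apply/perm_map/(inv_word_perm perm_tau). Qed.

Lemma mem_delta_tail x : (x \in delta_tail) = (j.+1 < x <= n).
Proof. by rewrite (perm_mem perm_delta_tail) mem_iota; lia. Qed.

Lemma perm_pi_delta : is_permn n (pi ++ delta).
Proof.
rewrite /is_permn addn1 -addnS iotaD; apply: perm_cat; first exact: inv_word_perm.
by rewrite add1n /= perm_cons perm_delta_tail.
Qed.

Lemma inv_word_head mu : is_permn n mu ->
  (nth 0 (inv_word mu) 0 == j.+1) = (nth 0 mu j == 1).
Proof.
move=> perm_mu; have lt_jn : j < size mu by rewrite (size_permn perm_mu) addn1 ltnS leq_addr.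
rewrite nth_inv_word ?(leq_ltn_trans _ lt_jn) // eqSS.
by rewrite -(nth_eq_index_uniq 0) ?(uniq_permn perm_mu).
Qed.

Lemma subseq_pi_inv_word mu : is_permn n mu ->
  subseq pi (inv_word mu) = (std (take j mu) == sigma).
Proof.
move=> perm_mu; have perm_alpha := inv_word_perm perm_mu.
rewrite (sameP (subseq_uniqP (uniq_permn perm_alpha)) eqP) (eq_in_filter (a2 := leq^~ j)).
  rewrite (filter_inv_word_take j perm_mu).
  by rewrite (eq_inv_word perm_sigma (std_perm (take_uniq j (uniq_permn perm_mu)))) eq_sym.
move=> x; rewrite (mem_permn perm_alpha) => /andP[x_gt0 _].
by rewrite (mem_permn (inv_word_perm perm_sigma)) x_gt0.
Qed.

Lemma subseq_delta_inv_word mu : is_permn n mu -> nth 0 mu j = 1 ->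
  subseq delta (inv_word mu) = (std (drop j.+1 mu) == tau).
Proof.
move=> perm_mu mu_j; have perm_alpha := inv_word_perm perm_mu.
have alpha_cons : inv_word mu = j.+1 :: behead (inv_word mu).
  have : 0 < size (inv_word mu) by rewrite (size_permn perm_alpha) addn1.
  move/eqP: mu_j; rewrite -inv_word_head //.
  by case: (inv_word mu) => //= a t /eqP ->.
have /andP[_ uniq_tail] : uniq (j.+1 :: behead (inv_word mu)).
  by rewrite -alpha_cons (uniq_permn perm_alpha).
rewrite [in LHS]alpha_cons /= eqxx (sameP (subseq_uniqP uniq_tail) eqP).
rewrite (eq_in_filter (a2 := ltn j.+1)).
  have -> : filter (ltn j.+1) (behead (inv_word mu)) = filter (ltn j.+1) (inv_word mu).
    by rewrite [in RHS]alpha_cons /= ltnn.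
  rewrite (filter_inv_word_drop j.+1 perm_mu) delta_tailE (inj_eq (inj_map (@addnI j.+1))).
  by rewrite (eq_inv_word perm_tau (std_perm (drop_uniq j.+1 (uniq_permn perm_mu)))) eq_sym.
move=> x /mem_behead; rewrite (mem_permn perm_alpha) => /andP[_ le_xn].
by rewrite mem_delta_tail le_xn andbT.
Qed.

Lemma lozenge_inv_word mu : is_permn n mu ->
  (mu \in lozenge j k sigma tau) = (inv_word mu \in Sh_l pi delta).
Proof.
move=> perm_mu; have alpha_shuffle : perm_eq (inv_word mu) (pi ++ delta).
  by apply: perm_trans (inv_word_perm perm_mu) _; rewrite perm_sym; apply: perm_pi_delta.
rewrite !mem_filter !mem_permutations [perm_eq mu _]perm_mu alpha_shuffle !andbT /=.
rewrite inv_word_head // subseq_pi_inv_word //.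
by case: eqP => //= /(subseq_delta_inv_word perm_mu) ->; rewrite andbC.
Qed.

Lemma lozenge_permn mu : mu \in lozenge j k sigma tau -> is_permn n mu.
Proof. by rewrite mem_filter mem_permutations => /andP[]. Qed.

Lemma perm_map_inv_word_lozenge :
  perm_eq (map inv_word (lozenge j k sigma tau)) (Sh_l pi delta).
Proof.
apply: uniq_perm.
- rewrite map_inj_in_uniq ?filter_uniq ?permutations_uniq //.
  by move=> m1 m2 /lozenge_permn p1 /lozenge_permn p2; apply: inv_word_inj p1 p2.
- by rewrite !filter_uniq ?permutations_uniq.
move=> alpha; apply/mapP/idP => [[mu mu_loz ->]|alpha_Sh].
  by rewrite -lozenge_inv_word // lozenge_permn.
have perm_alpha : is_permn n alpha.
  move: alpha_Sh; rewrite !mem_filter mem_permutations => /andP[_ /andP[_ /perm_trans]].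
  by apply; apply: perm_pi_delta.
exists (inv_word alpha); last by rewrite (inv_wordK perm_alpha).
by rewrite lozenge_inv_word ?(inv_wordK perm_alpha) ?(inv_word_perm perm_alpha).
Qed.

Lemma genpoly_filter_lozenge (P Q : pred (seq nat)) :
  {in lozenge j k sigma tau, forall mu, P mu = Q (inv_word mu)} ->
  genpoly ides (filter P (lozenge j k sigma tau)) = genpoly des (filter Q (Sh_l pi delta)).
Proof.
move=> PQ; rewrite /genpoly /ides -(big_map inv_word predT (fun a => ('X^(des a))%R)).
apply: perm_big; rewrite (eq_in_filter PQ) -filter_map.
exact: perm_filter perm_map_inv_word_lozenge.
Qed.

Lemma lozenge_inv_word_cons mu : mu \in lozenge j k sigma tau ->
  exists2 a, inv_word mu = j.+1 :: a & delta_tail = filter (mem delta_tail) a.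
Proof.
move=> mu_loz; have perm_mu := lozenge_permn mu_loz.
apply: (@Sh_l_cons pi); first exact: uniq_permn (inv_word_perm perm_mu).
by rewrite -lozenge_inv_word.
Qed.

(* For j = k = 0 the permutation [:: 1] violates the equivalence. *)
Lemma tri_up_inv_word mu : 0 < j + k -> mu \in lozenge j k sigma tau ->
  (n \in drop j.+1 mu) = (last 0 (inv_word mu) == last 0 delta).
Proof.
move=> jk_gt0 mu_loz; have perm_mu := lozenge_permn mu_loz.
have perm_alpha := inv_word_perm perm_mu.
have n_mu : n \in mu by rewrite (mem_permn perm_mu) leqnn addn1.
have index_n : index n mu < n by rewrite -[X in _ < X](size_permn perm_mu) index_mem.
have last_alpha : last 0 (inv_word mu) = (index n mu).+1.
  rewrite -nth_last size_inv_word (size_permn perm_mu) addn1.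
  by rewrite nth_inv_word ?(size_permn perm_mu) ?addn1.
have [a alpha_cons tail_eq] := lozenge_inv_word_cons mu_loz.
have /andP[jNa uniq_a] : uniq (j.+1 :: a) by rewrite -alpha_cons (uniq_permn perm_alpha).
have a_nil : a != [::].
  by rewrite -size_eq0 -eqSS -/(size (j.+1 :: a)) -alpha_cons (size_permn perm_alpha) addn1 -lt0n.
rewrite (mem_drop_index _ (uniq_permn perm_mu) n_mu) alpha_cons /= tail_eq eq_sym.
rewrite last_filter_eq // inE mem_delta_tail.
by move: last_alpha; rewrite alpha_cons /= => ->; rewrite ltnS index_n andbT.
Qed.

Lemma tri_down_inv_word mu : mu \in lozenge j k sigma tau ->
  (2 \in drop j.+1 mu) = (1 < size delta) && (nth 0 (inv_word mu) 1 == nth 0 delta 1).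
Proof.
move=> mu_loz; have perm_mu := lozenge_permn mu_loz.
have perm_alpha := inv_word_perm perm_mu.
rewrite /= size_map size_inv_word (size_permn perm_tau) ltnS.
have [k0|k_gt0] := posnP k.
  by rewrite drop_oversize // (size_permn perm_mu) k0 addn0 addn1.
have two_mu : 2 \in mu by rewrite (mem_permn perm_mu); lia.
have index_2 : index 2 mu < n by rewrite -[X in _ < X](size_permn perm_mu) index_mem.
have second_alpha : nth 0 (inv_word mu) 1 = (index 2 mu).+1.
  by rewrite nth_inv_word // (size_permn perm_mu); lia.
have [a alpha_cons tail_eq] := lozenge_inv_word_cons mu_loz.
have /andP[_ uniq_a] : uniq (j.+1 :: a) by rewrite -alpha_cons (uniq_permn perm_alpha).
have a0 : 0 \notin a.
  by apply: contraTN isT => a0; move: (mem_permn perm_alpha 0); rewrite alpha_cons inE a0 orbT.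
have a_nil : a != [::].
  by rewrite -size_eq0 -eqSS -/(size (j.+1 :: a)) -alpha_cons (size_permn perm_alpha); lia.
rewrite (mem_drop_index _ (uniq_permn perm_mu) two_mu) alpha_cons /= !nth0 tail_eq eq_sym.
rewrite head_filter_eq // inE mem_delta_tail.
by move: second_alpha; rewrite alpha_cons /= nth0 => ->; rewrite ltnS index_2 andbT.
Qed.

End Lozenge.

Theorem proposition3p3 (j k : nat) (sigma tau : seq nat) :
  is_permn j sigma -> is_permn k tau ->
  let pi := inv_word sigma in
  let delta := j.+1 :: [seq x + j.+1 | x <- inv_word tau] in
  [/\ genpoly ides (lozenge j k sigma tau) = genpoly des (Sh_l pi delta),
      (0 < j + k)%N ->
        genpoly ides (tri_up j k sigma tau) = genpoly des (Sh_ls pi delta)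
    & genpoly ides (tri_down j k sigma tau) = genpoly des (Sh_ll pi delta)].
Proof.
move=> perm_sigma perm_tau pi delta.
have transfer := genpoly_filter_lozenge perm_sigma perm_tau.
split.
- by have := transfer predT predT (fun _ _ => erefl); rewrite !filter_predT.
- by move=> jk_gt0; apply: transfer => mu; apply: tri_up_inv_word.
- by apply: transfer => mu; apply: tri_down_inv_word.
Qed.
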